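(* Let $(R,\cdot,\alpha)$ be a non-unital hom-associative ring, let $\sigma,\delta\colon R\to R$ be left $R$-additive maps, extend $\alpha$ homogeneously to $R[X;\sigma,\delta]$, and suppose $R[X;\sigma,\delta]$ is hom-associative with this twisting map. Then for all $a,b,c\in R$: $$(a\cdot b)\cdot\delta(\alpha(c))=(a\cdot b)\cdot\alpha(\delta(c)),\qquad (a\cdot b)\cdot\sigma(\alpha(c))=(a\cdot b)\cdot\alpha(\sigma(c)),$$ $$\alpha(a)\cdot\delta(b\cdot c)=\alpha(a)\cdot\big(\delta(b)\cdot c+\sigma(b)\cdot\delta(c)\big),\qquad \alpha(a)\cdot\sigma(b\cdot c)=\alpha(a)\cdot\big(\sigma(b)\cdot\sigma(c)\big).$$
   Context: A hom-associative ring is a triple $(R,\cdot,\alpha)$ where $R$ is an abelian group with a biadditive (not necessarily associative or unital) multiplication $\cdot$ and an additive map $\alpha\colon R\to R$ satisfying $\alpha(a)\cdot(b\cdot c)=(a\cdot b)\cdot\alpha(c)$ for all $a,b,c$. $\mathbb{N}$ denotes the non-negative integers. A map $\beta\colon R\to R$ is left $R$-additive if $r\cdot\beta(s+t)=r\cdot(\beta(s)+\beta(t))$ for all $r,s,t\in R$. For $m\in\mathbb{N}$ and $0\le i\le m$, $\pi_i^m\colon R\to R$ denotes the sum of all $\binom{m}{i}$ compositions of $i$ copies of $\sigma$ and $m-i$ copies of $\delta$ in arbitrary order ($\pi_0^0=\mathrm{id}_R$), and $\pi_i^m:=0$ if $i<0$ or $i>m$. The non-unital, non-associative Ore extension $R[X;\sigma,\delta]$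 is the set of formal sums $\sum_{i\in\mathbb{N}}a_iX^i$ with $a_i\in R$, finitely many nonzero, with coefficientwise addition and the distributive multiplication determined by $aX^m\cdot bX^n=\sum_{i\in\mathbb{N}}(a\cdot\pi_i^m(b))X^{i+n}$. The homogeneous extension of $\alpha$ is $\alpha\left(\sum_ia_iX^i\right):=\sum_i\alpha(a_i)X^i$. *)

From HB Require Import structures.
From mathcomp Require Import all_boot all_order all_algebra.
Set Implicit Arguments. Unset Strict Implicit. Unset Printing Implicit Defensive.
Import GRing.Theory.
Local Open Scope ring_scope.

Section OreDefs.
Variable R : zmodType.
Variable mul : R -> R -> R.
Variables sigma delta : R -> R.

Definition left_R_additive (beta : R -> R) : Prop :=
  forall r s t : R, mul r (beta (s + t)) = mul r (beta s + beta t).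

Definition comp_word (w : seq bool) (x : R) : R :=
  foldr (fun b y => if b then sigma y else delta y) x w.

Definition pi_map (m i : nat) (x : R) : R :=
  \sum_(w : m.-tuple bool | count id w == i) comp_word w x.

(* Elements of R[X;sigma,delta] are coefficient sequences p (p`_i is the
   coefficient of X^i).  Formal sums only contain terms with nonzero
   coefficients, so products of monomials are only formed for nonzero
   coefficients. *)
Definition ore_coef (p q : seq R) (k : nat) : R :=
  \sum_(m < size p) \sum_(n < size q) \sum_(i < m.+1 | (i + n)%N == k)
     (if (p`_m == 0) || (q`_n == 0) then 0 else mul p`_m (pi_map m i q`_n)).

Definition ore_mul (p q : seq R) : seq R := mkseq (ore_coef p q) (size p + size q).

Definition ore_eq (p q : seq R) : Prop := forall k, p`_k = q`_k.

Definition ore_alpha (alpha : R -> R) (p : seq R) : seq R := map alpha p.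

Definition ore_hom_assoc (alpha : R -> R) : Prop :=
  forall p q r : seq R,
    ore_eq (ore_mul (ore_alpha alpha p) (ore_mul q r))
           (ore_mul (ore_mul p q) (ore_alpha alpha r)).
End OreDefs.

Definition hom_assoc_ring (R : zmodType) (mul : R -> R -> R) (alpha : R -> R) : Prop :=
  [/\ (forall a b c, mul (a + b) c = mul a c + mul b c),
      (forall a b c, mul a (b + c) = mul a b + mul a c),
      (forall a b, alpha (a + b) = alpha a + alpha b)
    & (forall a b c, mul (alpha a) (mul b c) = mul (mul a b) (alpha c))].

(* Compare the coefficients of X^0 and X^1 in alpha(p) (q r) = (p q) alpha(r)
   for polynomials of degree at most one, where pi^1_0 = delta and
   pi^1_1 = sigma.  The triple (x, y X, z) yields
   alpha(x) (y delta(z)) = (x y) delta(alpha z) and its sigma analogue; by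
   hom-associativity of R the left sides equal (x y) alpha(delta z), resp.
   (x y) alpha(sigma z), which gives the first two identities.  The triple
   (a X, b, c) yields alpha(a) delta(b c) = (a delta b) alpha(c)
   + (a sigma b) delta(alpha c) and alpha(a) sigma(b c) = (a sigma b)
   sigma(alpha c); rewriting delta(alpha c) and sigma(alpha c) by the first two
   identities and moving alpha back by hom-associativity gives the last two. *)

From mathcomp Require Import all_boot all_order all_algebra zify.
Set Implicit Arguments.
Unset Strict Implicit.
Unset Printing Implicit Defensive.
Import GRing.Theory.
Local Open Scope ring_scope.

Section PiMapLowDegree.
Variable R : zmodType.
Variables sigma delta : R -> R.

Lemma pi_map00 x : pi_map sigma delta 0 0 x = x.
Proof.
rewrite /pi_map (big_pred1 [tuple]) // => w.
by case: w => [[|] //= w0]; rewrite eqxx; apply/esym/eqP/val_inj.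
Qed.

Lemma pi_map10 x : pi_map sigma delta 1 0 x = delta x.
Proof.
rewrite /pi_map (big_pred1 [tuple false]) // => w.
by case: w => [[|[] [|]] //= w1]; rewrite ?eqxx //; apply/eqP; case.
Qed.

Lemma pi_map11 x : pi_map sigma delta 1 1 x = sigma x.
Proof.
rewrite /pi_map (big_pred1 [tuple true]) // => w.
by case: w => [[|[] [|]] //= w1]; rewrite ?eqxx //; apply/eqP; case.
Qed.

End PiMapLowDegree.

Lemma big_nat_vanishing_tail (R : zmodType) (a b : nat) (F : nat -> R) :
  (forall m, (minn a b <= m)%N -> F m = 0) ->
  \sum_(0 <= m < a) F m = \sum_(0 <= m < b) F m.
Proof.
wlog le_ab : a b / (a <= b)%N => [W F0|].
  by case: (leqP a b) => [/W->//|/ltnW/W ->] //; rewrite minnC.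
move=> F0; rewrite (big_cat_nat (leq0n a) le_ab) /=.
rewrite [X in _ + X]big1_seq ?addr0 // => m /andP[_].
by rewrite mem_index_iota => /andP[le_am _]; apply: F0; rewrite (minn_idPl le_ab).
Qed.

Section OreExtension.
Variable R : zmodType.
Variable mul : R -> R -> R.
Variables sigma delta : R -> R.
Hypothesis mulDl : forall a b c, mul (a + b) c = mul a c + mul b c.
Hypothesis mulDr : forall a b c, mul a (b + c) = mul a b + mul a c.
Hypothesis sigma_additive : left_R_additive mul sigma.
Hypothesis delta_additive : left_R_additive mul delta.

Lemma mul0x x : mul 0 x = 0.
Proof. by apply/(@addrI _ (mul 0 x)); rewrite -mulDl !addr0. Qed.

Lemma mulx0 x : mul x 0 = 0.
Proof. by apply/(@addrI _ (mul x 0)); rewrite -mulDr !addr0. Qed.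

Lemma mul_left_R_additive0 beta x : left_R_additive mul beta -> mul x (beta 0) = 0.
Proof.
by move=> beta_add; apply/(@addrI _ (mul x (beta 0))); rewrite -mulDr -beta_add !addr0.
Qed.

Definition ore_term (x y : R) (m i : nat) : R :=
  if (x == 0) || (y == 0) then 0 else mul x (pi_map sigma delta m i y).

Lemma ore_coefE p q k : ore_coef mul sigma delta p q k =
  \sum_(0 <= m < size p) \sum_(0 <= n < size q)
    \sum_(i < m.+1 | (i + n)%N == k) ore_term p`_m q`_n m i.
Proof. by rewrite /ore_coef big_mkord; apply: eq_bigr => m _; rewrite big_mkord. Qed.

Lemma ore_term0l y m i : ore_term 0 y m i = 0.
Proof. by rewrite /ore_term eqxx. Qed.

Lemma ore_term0r x m i : ore_term x 0 m i = 0.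
Proof. by rewrite /ore_term eqxx orbT. Qed.

(* The guard in [ore_coef] is harmless in degree at most one: there [pi_map]
   is [id], [delta] or [sigma], and [mul x (beta 0) = 0]. *)
Lemma ore_term_deg_le1 x y m i : (m <= 1)%N -> (i <= m)%N ->
  ore_term x y m i = mul x (pi_map sigma delta m i y).
Proof.
rewrite /ore_term; case: eqP => [->|_]; first by rewrite mul0x.
case: eqP => [->|//] /=.
case: m => [|[|//]] _; case: i => [|[|//]] // _;
  by rewrite ?pi_map00 ?pi_map10 ?pi_map11 ?mulx0 ?mul_left_R_additive0.
Qed.

Definition coef_vanish_from (p : seq R) (N : nat) := forall m, (N <= m)%N -> p`_m = 0.

Lemma coef_vanish_from_size p : coef_vanish_from p (size p).
Proof. exact: nth_default. Qed.
Arguments coef_vanish_from_size : clear implicits.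
Local Hint Resolve coef_vanish_from_size : core.

Lemma coef_vanish_from_min p N m :
  coef_vanish_from p N -> (minn (size p) N <= m)%N -> p`_m = 0.
Proof. by move=> pN; rewrite geq_min => /orP[/(nth_default 0)|/pN]. Qed.

Lemma ore_coef_truncate p q M N k :
  coef_vanish_from p M -> coef_vanish_from q N ->
  ore_coef mul sigma delta p q k =
  \sum_(0 <= m < M) \sum_(0 <= n < N)
    \sum_(i < m.+1 | (i + n)%N == k) ore_term p`_m q`_n m i.
Proof.
move=> pM qN; rewrite ore_coefE (@big_nat_vanishing_tail _ _ M);
  last by move=> m /(coef_vanish_from_min pM) ->; rewrite big1 // => n _;
          apply: big1 => i _; rewrite ore_term0l.
apply: eq_bigr => m _; apply: big_nat_vanishing_tail => n /(coef_vanish_from_min qN) ->.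
by apply: big1 => i _; rewrite ore_term0r.
Qed.

Lemma ore_coef_eq0 p q M N k :
  coef_vanish_from p M -> coef_vanish_from q N -> (M + N <= k.+1)%N ->
  ore_coef mul sigma delta p q k = 0.
Proof.
move=> pM qN lek; rewrite (ore_coef_truncate _ pM qN).
rewrite big1_seq // => m /andP[_]; rewrite mem_index_iota => /andP[_ ltm].
rewrite big1_seq // => n /andP[_]; rewrite mem_index_iota => /andP[_ ltn].
by apply: big1 => i /eqP eqk; exfalso; have := ltn_ord i; lia.
Qed.

Lemma nth_ore_mul p q k :
  (ore_mul mul sigma delta p q)`_k = ore_coef mul sigma delta p q k.
Proof.
rewrite /ore_mul; case: (ltnP k (size p + size q)) => [ltk|lek].
  by rewrite nth_mkseq.
rewrite nth_default ?size_mkseq //.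
by rewrite (ore_coef_eq0 (coef_vanish_from_size p) (coef_vanish_from_size q)) //; lia.
Qed.

Lemma coef_vanish_from_ore_mul p q M N :
  coef_vanish_from p M -> coef_vanish_from q N ->
  coef_vanish_from (ore_mul mul sigma delta p q) (M + N).-1.
Proof. by move=> pM qN k lek; rewrite nth_ore_mul (ore_coef_eq0 pM qN) //; lia. Qed.

Lemma coef_ore_mul_constl p q k :
  coef_vanish_from p 1 -> (ore_mul mul sigma delta p q)`_k = mul p`_0 q`_k.
Proof.
move=> p1; rewrite nth_ore_mul (ore_coef_truncate _ p1 (coef_vanish_from_size q)) big_nat1.
under eq_bigr => n _ do rewrite big_ord1_cond add0n ore_term_deg_le1 // pi_map00.
rewrite -big_mkcond (big_nat1_eq _ (fun n => mul p`_0 q`_n)).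
by case: ltnP => // /(nth_default 0) ->; rewrite mulx0.
Qed.

Lemma coef0_ore_mul_lin_const p q :
  coef_vanish_from p 2 -> coef_vanish_from q 1 ->
  (ore_mul mul sigma delta p q)`_0 = mul p`_0 q`_0 + mul p`_1 (delta q`_0).
Proof.
move=> p2 q1; rewrite nth_ore_mul (ore_coef_truncate _ p2 q1) big_nat_recr //= !big_nat1.
rewrite big_mkcond !big_ord_recr !big_ord0 /= !add0r.
rewrite big_mkcond !big_ord_recr !big_ord0 /= !add0r.
by rewrite addr0 !ore_term_deg_le1 // pi_map00 pi_map10.
Qed.

Lemma coef1_ore_mul_lin_const p q :
  coef_vanish_from p 2 -> coef_vanish_from q 1 ->
  (ore_mul mul sigma delta p q)`_1 = mul p`_1 (sigma q`_0).
Proof.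
move=> p2 q1; rewrite nth_ore_mul (ore_coef_truncate _ p2 q1) big_nat_recr //= !big_nat1.
rewrite big_mkcond !big_ord_recr !big_ord0 /= !add0r.
rewrite big_mkcond !big_ord_recr !big_ord0 /= !add0r.
by rewrite ore_term_deg_le1 // pi_map11.
Qed.

Variable alpha : R -> R.
Hypothesis alphaD : forall a b, alpha (a + b) = alpha a + alpha b.
Hypothesis ore_assoc : ore_hom_assoc mul sigma delta alpha.

Lemma ore_hom_assoc_const_X_const x y z :
  mul (alpha x) (mul y (delta z)) = mul (mul x y) (delta (alpha z)) /\
  mul (alpha x) (mul y (sigma z)) = mul (mul x y) (sigma (alpha z)).
Proof.
have xyX := coef_vanish_from_ore_mul (coef_vanish_from_size [:: x])
                                     (coef_vanish_from_size [:: 0; y]).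
have assoc_xyz := ore_assoc [:: x] [:: 0; y] [:: z]; rewrite /ore_alpha /= in assoc_xyz.
split.
- move: (assoc_xyz 0); rewrite coef_ore_mul_constl //.
  rewrite coef0_ore_mul_lin_const // coef0_ore_mul_lin_const //.
  by rewrite !coef_ore_mul_constl //= mulx0 !mul0x !add0r.
- move: (assoc_xyz 1); rewrite coef_ore_mul_constl //.
  rewrite coef1_ore_mul_lin_const // coef1_ore_mul_lin_const //.
  by rewrite coef_ore_mul_constl.
Qed.

Lemma ore_hom_assoc_X_const_const a b c :
  mul (alpha a) (delta (mul b c)) =
    mul (mul a (delta b)) (alpha c) + mul (mul a (sigma b)) (delta (alpha c)) /\
  mul (alpha a) (sigma (mul b c)) = mul (mul a (sigma b)) (sigma (alpha c)).
Proof.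
have aXb := coef_vanish_from_ore_mul (coef_vanish_from_size [:: 0; a])
                                     (coef_vanish_from_size [:: b]).
have bc := coef_vanish_from_ore_mul (coef_vanish_from_size [:: b])
                                    (coef_vanish_from_size [:: c]).
have alpha0 : alpha 0 = 0 by apply/(@addrI _ (alpha 0)); rewrite -alphaD !addr0.
have assoc_abc := ore_assoc [:: 0; a] [:: b] [:: c]; rewrite /ore_alpha /= in assoc_abc.
split.
- move: (assoc_abc 0); rewrite coef0_ore_mul_lin_const // coef_ore_mul_constl //.
  rewrite coef0_ore_mul_lin_const // coef0_ore_mul_lin_const //.
  rewrite coef1_ore_mul_lin_const //=.
  by rewrite alpha0 !mul0x !add0r.
- move: (assoc_abc 1); rewrite coef1_ore_mul_lin_const // coef_ore_mul_constl //.
  by rewrite coef1_ore_mul_lin_const // coef1_ore_mul_lin_const.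
Qed.

End OreExtension.

Theorem mainTheorem6 (R : zmodType) (mul : R -> R -> R) (alpha sigma delta : R -> R) :
  hom_assoc_ring mul alpha ->
  left_R_additive mul sigma ->
  left_R_additive mul delta ->
  ore_hom_assoc mul sigma delta alpha ->
  forall a b c : R,
    [/\ mul (mul a b) (delta (alpha c)) = mul (mul a b) (alpha (delta c)),
        mul (mul a b) (sigma (alpha c)) = mul (mul a b) (alpha (sigma c)),
        mul (alpha a) (delta (mul b c)) =
          mul (alpha a) (mul (delta b) c + mul (sigma b) (delta c))
      & mul (alpha a) (sigma (mul b c)) = mul (alpha a) (mul (sigma b) (sigma c))].
Proof.
move=> [mulDl mulDr alphaD hom_assoc] sigma_add delta_add ore_assoc a b c.
have const_X_const :=
  ore_hom_assoc_const_X_const mulDl mulDr sigma_add delta_add ore_assoc.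
have X_const_const :=
  ore_hom_assoc_X_const_const mulDl mulDr sigma_add delta_add alphaD ore_assoc.
have delta_alpha x y z : mul (mul x y) (delta (alpha z)) = mul (mul x y) (alpha (delta z)).
  by rewrite -(const_X_const x y z).1 hom_assoc.
have sigma_alpha x y z : mul (mul x y) (sigma (alpha z)) = mul (mul x y) (alpha (sigma z)).
  by rewrite -(const_X_const x y z).2 hom_assoc.
split => //.
- by rewrite (X_const_const a b c).1 delta_alpha -!hom_assoc mulDr.
- by rewrite (X_const_const a b c).2 sigma_alpha -hom_assoc.
Qed.
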